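(* Let $*$ be a rank-one preserving product on $M_{n\times m}(\mathbb{C})$, and write its identity element as $e f^*$ with $e\in\mathbb{C}^n$, $f\in\mathbb{C}^m$. Then for all $v,w\in\mathbb{C}^n$ there exists $u\in\mathbb{C}^n$ such that $v f^* * w f^* = u f^*$. Similarly, for all $v,w\in\mathbb{C}^m$ there exists $u\in\mathbb{C}^m$ such that $e v^* * e w^* = e u^*$.
   Context: A rank-one preserving product (ropp) on $M_{n\times m}(\mathbb{C})$ is an associative bilinear product $*$ on $M_{n\times m}(\mathbb{C})$ which has an identity element of rank one and such that the $*$-product of any two rank-one matrices has rank at most one. Here $u^*$ denotes the conjugate transpose of a column vector $u$. *)

(* The complex field C is modelled by an arbitrary
   numClosedFieldType (algebraically closed field with conjugation). *)
From HB Require Import structures.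
From mathcomp Require Import all_boot all_order all_algebra.
Set Implicit Arguments. Unset Strict Implicit. Unset Printing Implicit Defensive.
Import Order.TTheory GRing.Theory Num.Theory.
Local Open Scope ring_scope.

Definition cstar (C : numClosedFieldType) (k : nat) (u : 'cV[C]_k) : 'rV[C]_k :=
  (map_mx Num.conj u)^T.

Definition ropp (C : numClosedFieldType) (n m : nat)
    (mul : 'M[C]_(n, m) -> 'M[C]_(n, m) -> 'M[C]_(n, m)) (E : 'M[C]_(n, m)) : Prop :=
  [/\
      (forall (a : C) (A B D : 'M[C]_(n, m)), mul (a *: A + B) D = a *: mul A D + mul B D),
      (forall (a : C) (A B D : 'M[C]_(n, m)), mul A (a *: B + D) = a *: mul A B + mul A D),
      (forall A B D : 'M[C]_(n, m), mul A (mul B D) = mul (mul A B) D),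
      (\rank E = 1)%N /\ (forall A : 'M[C]_(n, m), mul E A = A /\ mul A E = A)
    &
      (forall A B : 'M[C]_(n, m), \rank A = 1%N -> \rank B = 1%N -> (\rank (mul A B) <= 1)%N)].

From HB Require Import structures.
From mathcomp Require Import all_boot all_order all_algebra.
Set Implicit Arguments. Unset Strict Implicit. Unset Printing Implicit Defensive.
Import GRing.Theory Num.Theory.
Local Open Scope ring_scope.

(* If P := (v phi) *
   (w phi) had a row outside the line of phi, pick c with phi c = 0, P c != 0 and
   d with phi d = 1.  Bilinearity and the identity give
       ((v + s e) phi) * ((w + t e) phi) = P + (t v + s w + s t e) phi,
   a matrix of rank <= 1 sending c to p := P c != 0; so it sends d into the line
   of p, i.e. P d + t v + s w + s t e lies on that line for all scalars s, t.
   Taking s, t in {0, 1} puts v, w and e on the line of p, hence v phi and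
   w phi are multiples of E and so is P, a contradiction.  The statement for
   products e v^* * e w^* follows by applying this to the transposed product. *)

Section LinearAlgebra.
Variable F : fieldType.

Lemma rank_le1_image_colinear (n m : nat) (M : 'M[F]_(n, m)) (c d : 'cV[F]_m) :
  (\rank M <= 1)%N -> M *m c != 0 -> exists k : F, M *m d = k *: (M *m c).
Proof.
move=> rM Mc0.
have rMc : \rank (M *m c)^T = 1%N.
  apply/eqP; rewrite eqn_leq rank_leq_row lt0n mxrank_eq0.
  by apply: contra Mc0 => /eqP Mc; rewrite -[M *m c]trmxK Mc linear0.
have Mc_sub : ((M *m c)^T <= M^T)%MS by rewrite trmx_mul submxMl.
have M_sub : (M^T <= (M *m c)^T)%MS.
  have /leqifP := mxrank_leqif_sup Mc_sub.
  by case: ifP => // _; rewrite rMc mxrank_tr ltnNge rM.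
have /submxP[D defMd] : ((M *m d)^T <= (M *m c)^T)%MS.
  by apply: submx_trans M_sub; rewrite trmx_mul submxMl.
exists (D 0 0); apply: trmx_inj.
by rewrite defMd [D]mx11_scalar mul_scalar_mx mxE eqxx mulr1n linearZ.
Qed.

Lemma kernel_vector_off_span (n m : nat) (P : 'M[F]_(n, m)) (phi : 'rV[F]_m) :
  ~~ (P <= phi)%MS -> exists c : 'cV[F]_m, phi *m c = 0 /\ P *m c != 0.
Proof.
rewrite submxE => PN.
have [j Pj] : exists j, col j (P *m cokermx phi) != 0.
  apply/existsP; apply: contraNT PN; rewrite negb_exists => /forallP P0.
  apply/eqP/matrixP => i k; have /negPn/eqP/matrixP/(_ i 0) := P0 k.
  by rewrite !mxE.
exists (col j (cokermx phi)); split; last by rewrite !colE mulmxA in Pj *.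
by rewrite colE mulmxA mulmx_coker mul0mx.
Qed.

Lemma nonzero_row_right_inverse (m : nat) (phi : 'rV[F]_m) :
  phi != 0 -> exists d : 'cV[F]_m, phi *m d = 1%:M.
Proof.
move=> phi0; have : row_full phi^T.
  by rewrite /row_full mxrank_tr eqn_leq rank_leq_row lt0n mxrank_eq0.
case/row_fullP=> B HB; exists B^T.
by rewrite -[phi]trmxK -trmx_mul HB trmx1.
Qed.

Lemma bilinear_family_in_line (V : lmodType F) (a v w e p : V) :
  (forall s t : F, exists k : F, a + t *: v + s *: w + (s * t) *: e = k *: p) ->
  exists kv kw ke : F, [/\ v = kv *: p, w = kw *: p & e = ke *: p].
Proof.
move=> line.
have [k0] := line 0 0; have [k1] := line 0 1.
have [k2] := line 1 0; have [k3] := line 1 1.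
rewrite !(mul0r, mulr0, mulr1, scale0r, scale1r, addr0) => H3 H2 H1 H0.
have ev : v = (k1 - k0) *: p by rewrite scalerBl -H1 -H0 addrC addKr.
have ew : w = (k2 - k0) *: p by rewrite scalerBl -H2 -H0 addrC addKr.
exists (k1 - k0), (k2 - k0), (k3 - k1 - (k2 - k0)); split => //.
rewrite scalerBl -ew scalerBl -H3 -H1.
by rewrite -(addrA (a + v)) (addrC (a + v)) addrK (addrC w) addrK.
Qed.

End LinearAlgebra.

Section RankOnePreservingProduct.
Variables (C : numClosedFieldType) (n m : nat).
Variables (mul : 'M[C]_(n, m) -> 'M[C]_(n, m) -> 'M[C]_(n, m)) (E : 'M[C]_(n, m)).
Hypothesis mul_ropp : ropp mul E.

Lemma mulDl (A B D : 'M[C]_(n, m)) : mul (A + B) D = mul A D + mul B D.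
Proof. by case: mul_ropp => linl _ _ _ _; have := linl 1 A B D; rewrite !scale1r. Qed.

Lemma mulDr (A B D : 'M[C]_(n, m)) : mul D (A + B) = mul D A + mul D B.
Proof. by case: mul_ropp => _ linr _ _ _; have := linr 1 D A B; rewrite !scale1r. Qed.

Lemma mul0l (D : 'M[C]_(n, m)) : mul 0 D = 0.
Proof. by apply: (addrI (mul 0 D)); rewrite -mulDl !addr0. Qed.

Lemma mul0r (D : 'M[C]_(n, m)) : mul D 0 = 0.
Proof. by apply: (addrI (mul D 0)); rewrite -mulDr !addr0. Qed.

Lemma mulZl (a : C) (A D : 'M[C]_(n, m)) : mul (a *: A) D = a *: mul A D.
Proof. by case: mul_ropp => linl _ _ _ _; have := linl a A 0 D; rewrite !addr0 mul0l addr0. Qed.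

Lemma mulZr (a : C) (A D : 'M[C]_(n, m)) : mul D (a *: A) = a *: mul D A.
Proof. by case: mul_ropp => _ linr _ _ _; have := linr a D A 0; rewrite !addr0 mul0r addr0. Qed.

Lemma mul1l (A : 'M[C]_(n, m)) : mul E A = A.
Proof. by case: mul_ropp => _ _ _ [_ /(_ A) []]. Qed.

Lemma mul1r (A : 'M[C]_(n, m)) : mul A E = A.
Proof. by case: mul_ropp => _ _ _ [_ /(_ A) []]. Qed.

Lemma mul_rank_le1 (A B : 'M[C]_(n, m)) :
  (\rank A <= 1)%N -> (\rank B <= 1)%N -> (\rank (mul A B) <= 1)%N.
Proof.
move=> rA rB; have [->|A0] := eqVneq A 0; first by rewrite mul0l mxrank0.
have [->|B0] := eqVneq B 0; first by rewrite mul0r mxrank0.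
case: mul_ropp => _ _ _ _; apply; apply/eqP.
  by rewrite eqn_leq rA lt0n mxrank_eq0.
by rewrite eqn_leq rB lt0n mxrank_eq0.
Qed.

Variables (e : 'cV[C]_n) (phi : 'rV[C]_m).
Hypothesis defE : E = e *m phi.

Lemma identity_factors_nonzero : e != 0 /\ phi != 0.
Proof.
case: mul_ropp => _ _ _ [rE _] _; move: rE; rewrite defE.
by split; apply/negP => /eqP f0; rewrite f0 ?mul0mx ?mulmx0 mxrank0 in rE.
Qed.

Lemma mul_shift (v w : 'cV[C]_n) (s t : C) :
  mul ((v + s *: e) *m phi) ((w + t *: e) *m phi) =
  mul (v *m phi) (w *m phi) + (t *: v + s *: w + (s * t) *: e) *m phi.
Proof.
rewrite !mulmxDl -!scalemxAl -defE mulDl !mulDr !mulZl !mulZr mul1l mul1r mul1l.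
by rewrite scalerA !addrA.
Qed.

Lemma mul_row_line (v w : 'cV[C]_n) :
  exists u : 'cV[C]_n, mul (v *m phi) (w *m phi) = u *m phi.
Proof.
set P := mul _ _.
have [/submxP[u ->]|outP] := boolP (P <= phi)%MS; first by exists u.
have [e0 phi0] := identity_factors_nonzero.
have [c [phic Pc]] := kernel_vector_off_span outP.
have [d phid] := nonzero_row_right_inverse phi0.
have rphi (x : 'cV[C]_n) : (\rank (x *m phi) <= 1)%N.
  by apply: leq_trans (mxrankM_maxr _ _) (rank_leq_row _).
have line s t : exists k, P *m d + t *: v + s *: w + (s * t) *: e = k *: (P *m c).
  set M := mul ((v + s *: e) *m phi) ((w + t *: e) *m phi).
  have Mc : M *m c = P *m c.
    by rewrite /M mul_shift mulmxDl -mulmxA phic mulmx0 addr0.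
  have Mc0 : M *m c != 0 by rewrite Mc.
  have [k Md] := rank_le1_image_colinear d (mul_rank_le1 (rphi _) (rphi _)) Mc0.
  exists k; rewrite -Mc -Md /M mul_shift mulmxDl -mulmxA phid mulmx1.
  by rewrite !addrA.
have [kv [kw [ke [ev ew ee]]]] := bilinear_family_in_line line.
have ke0 : ke != 0 by apply: contra e0 => /eqP ke0; rewrite ee ke0 scale0r.
have onE x kx : x = kx *: (P *m c) -> x *m phi = (kx / ke) *: E.
  by move=> ->; rewrite defE ee -!scalemxAl scalerA divfK.
case/negP: outP; rewrite /P (onE _ _ ev) (onE _ _ ew) mulZl mulZr mul1l defE.
by rewrite !scalemxAl submxMl.
Qed.

End RankOnePreservingProduct.

Lemma ropp_trmx (C : numClosedFieldType) (n m : nat)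
    (mul : 'M[C]_(n, m) -> 'M[C]_(n, m) -> 'M[C]_(n, m)) (E : 'M[C]_(n, m)) :
  ropp mul E -> ropp (fun X Y : 'M[C]_(m, n) => (mul X^T Y^T)^T) E^T.
Proof.
case=> linl linr assoc [rE idE] r1; split.
- by move=> a A B D; rewrite linearD linearZ /= linl linearD linearZ.
- by move=> a A B D; rewrite linearD linearZ /= linr linearD linearZ.
- by move=> A B D; rewrite !trmxK assoc.
- split; first by rewrite mxrank_tr.
  by move=> A; rewrite trmxK; have [-> ->] := idE A^T; rewrite trmxK.
- by move=> A B rA rB; rewrite mxrank_tr; apply: r1; rewrite mxrank_tr.
Qed.

Lemma cstar_conj (C : numClosedFieldType) (k : nat) (u : 'cV[C]_k) :
  cstar (map_mx Num.conj u) = u^T.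
Proof. by congr (_^T); apply/matrixP => i j; rewrite !mxE conjCK. Qed.

(* The second half is the first one for the transposed product, whose identity
   is f^*^T e^T; conjugation turns the resulting row vector back into u^*. *)
Theorem mainTheorem2 (C : numClosedFieldType) (n m : nat)
    (mul : 'M[C]_(n, m) -> 'M[C]_(n, m) -> 'M[C]_(n, m)) (E : 'M[C]_(n, m))
    (e : 'cV[C]_n) (f : 'cV[C]_m) :
  ropp mul E -> E = e *m cstar f ->
  (forall v w : 'cV[C]_n, exists u : 'cV[C]_n,
      mul (v *m cstar f) (w *m cstar f) = u *m cstar f) /\
  (forall v w : 'cV[C]_m, exists u : 'cV[C]_m,
      mul (e *m cstar v) (e *m cstar w) = e *m cstar u).
Proof.
move=> hR defE; split; first exact: (mul_row_line hR defE).
move=> v w.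
have defEt : E^T = (cstar f)^T *m e^T by rewrite defE trmx_mul.
have [u Hu] := mul_row_line (ropp_trmx hR) defEt (cstar v)^T (cstar w)^T.
exists (map_mx Num.conj u); rewrite cstar_conj; apply: trmx_inj.
by rewrite [RHS]trmx_mul trmxK -Hu !trmx_mul !trmxK.
Qed.
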